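(* Let $s\in\{3,4\}$ and consider an $s$-stage explicit Runge–Kutta method with coefficients $a_{ij}$ (with $a_{ij}=0$ for $j\ge i$) and $b_i>0$, which is of order $s$ in OCP. Let $c_i=\sum_{j=1}^s a_{ij}$ and $\bar c_i=\sum_{j=1}^s\bar a_{ij}$ where $\bar a_{ij}=b_j-\frac{b_ja_{ji}}{b_i}$. Then $c_i=\bar c_i$ for all $i=1,\dots,s$.
   Context: A Runge–Kutta method with coefficients $a_{ij}$, $b_i>0$ is of order $r$ in OCP if the partitioned Runge–Kutta method consisting of the method $(a_{ij},b_i)$ for the first component and the method $(\bar a_{ij},\bar b_i)$ with $\bar a_{ij}=b_j-b_ja_{ji}/b_i$, $\bar b_i=b_i$ for the second component has classical order $r$. *)

From mathcomp Require Import all_boot all_order all_algebra.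
From mathcomp Require Import reals.
Set Implicit Arguments. Unset Strict Implicit. Unset Printing Implicit Defensive.
Import Order.TTheory GRing.Theory Num.Theory.
Local Open Scope ring_scope.

(* Bicolored rooted trees (HLW, Sect. III.2): a root colour and a list of
   subtrees.  Colour [true] = first component (method (a,b)),
   colour [false] = second component (method (abar,bbar)). *)
Inductive btree := BNode of bool & seq btree.

Definition bcolor (t : btree) : bool := let: BNode c _ := t in c.

Fixpoint bsize (t : btree) : nat :=
  let: BNode _ ts := t in (sumn (map bsize ts)).+1.

Fixpoint bgamma (t : btree) : nat :=
  let: BNode _ ts := t in
  ((sumn (map bsize ts)).+1 * foldr muln 1%N (map bgamma ts))%N.

(* internal elementary weight Phi_i(t) of a partitioned RK method with
   coefficient matrices A c (c the colour); the edge from a vertex at stage i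
   to a child u at stage j carries A (colour of u) i j. *)
Fixpoint bphi (R : nzRingType) (s : nat) (A : bool -> 'I_s -> 'I_s -> R)
    (t : btree) (i : 'I_s) : R :=
  let: BNode _ ts := t in
  foldr (fun u acc => (\sum_(j < s) A (bcolor u) i j * bphi A u j) * acc) 1 ts.

Definition prk_order (R : fieldType) (s : nat) (A : bool -> 'I_s -> 'I_s -> R)
    (B : bool -> 'I_s -> R) (r : nat) : Prop :=
  forall t : btree, (bsize t <= r)%N ->
    \sum_(i < s) B (bcolor t) i * bphi A t i = ((bgamma t)%:R)^-1.

Definition abar (R : fieldType) (s : nat) (a : 'I_s -> 'I_s -> R)
    (b : 'I_s -> R) (i j : 'I_s) : R := b j - b j * a j i / b i.

Definition ocp_order (R : fieldType) (s : nat) (a : 'I_s -> 'I_s -> R)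
    (b : 'I_s -> R) (r : nat) : Prop :=
  prk_order (fun c => if c then a else abar a b) (fun _ => b) r.

From mathcomp Require Import all_boot all_order all_algebra.
From mathcomp Require Import reals.
From mathcomp Require Import ring.
Set Implicit Arguments. Unset Strict Implicit. Unset Printing Implicit Defensive.
Import Order.TTheory GRing.Theory Num.Theory.
Local Open Scope ring_scope.

(* Writing [c] and [cbar] for the row sums of [a] and [abar], the order
   conditions of the three bicoloured trees with a root and two leaves give
   [sum b c^2 = sum b c cbar = sum b cbar^2 = 1/3].  Hence
   [sum b (c - cbar)^2 = 0], and since all [b_i > 0], [c = cbar]. *)

Definition rowsum (R : nzRingType) (s : nat) (A : 'I_s -> 'I_s -> R)
    (i : 'I_s) : R :=
  \sum_(j < s) A i j.

Definition cherry (c x y : bool) : btree :=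
  BNode c [:: BNode x [::]; BNode y [::]].

Lemma bsize_cherry (c x y : bool) : bsize (cherry c x y) = 3%N.
Proof. by []. Qed.

Lemma bgamma_cherry (c x y : bool) : bgamma (cherry c x y) = 3%N.
Proof. by []. Qed.

Lemma bphi_cherry (R : nzRingType) (s : nat) (A : bool -> 'I_s -> 'I_s -> R)
    (c x y : bool) (i : 'I_s) :
  bphi A (cherry c x y) i = rowsum (A x) i * rowsum (A y) i.
Proof.
rewrite /= mulr1 /rowsum.
by congr (_ * _); apply: eq_bigr => j _; rewrite mulr1.
Qed.

Lemma prk_order_cherry (R : fieldType) (s : nat)
    (A : bool -> 'I_s -> 'I_s -> R) (B : bool -> 'I_s -> R) (r : nat) :
  prk_order A B r -> (3 <= r)%N -> forall c x y : bool,
  \sum_(i < s) B c i * (rowsum (A x) i * rowsum (A y) i) = 3%:R^-1.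
Proof.
move=> AB_order r_ge3 c x y; rewrite -(bgamma_cherry c x y).
rewrite -AB_order ?bsize_cherry //.
by apply: eq_bigr => i _; rewrite bphi_cherry.
Qed.

Lemma weighted_sqr_sum_eq0 (R : realDomainType) (n : nat) (w f : 'I_n -> R) :
  (forall i, 0 < w i) -> \sum_(i < n) w i * f i ^+ 2 = 0 ->
  forall i, f i = 0.
Proof.
move=> w_gt0 sum_eq0 i.
have ge0 (j : 'I_n) : true -> 0 <= w j * f j ^+ 2.
  by move=> _; rewrite mulr_ge0 ?sqr_ge0 ?ltW ?w_gt0.
have /eqP := psumr_eq0P ge0 sum_eq0 (i := i) isT.
by rewrite mulf_eq0 (gt_eqF (w_gt0 i)) sqrf_eq0 => /eqP.
Qed.

Lemma eq_of_weighted_second_moments (R : realDomainType) (n : nat)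
    (w u v : 'I_n -> R) :
  (forall i, 0 < w i) ->
  \sum_(i < n) w i * (u i * u i) = \sum_(i < n) w i * (u i * v i) ->
  \sum_(i < n) w i * (v i * v i) = \sum_(i < n) w i * (u i * v i) ->
  u =1 v.
Proof.
move=> w_gt0 uu vv i; apply/eqP; rewrite -subr_eq0; apply/eqP.
apply: (weighted_sqr_sum_eq0 (f := fun j => u j - v j) w_gt0) => /=.
have -> : \sum_(j < n) w j * (u j - v j) ^+ 2 =
    (\sum_(j < n) w j * (u j * u j) - \sum_(j < n) w j * (u j * v j))
  + (\sum_(j < n) w j * (v j * v j) - \sum_(j < n) w j * (u j * v j)).
  by rewrite -!sumrB -big_split /=; apply: eq_bigr => j _; ring.
by rewrite uu vv !subrr addr0.
Qed.

Theorem proposition3p8 (R : realType) (s : nat)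
    (a : 'I_s -> 'I_s -> R) (b : 'I_s -> R) :
  (s = 3%N \/ s = 4%N) ->
  (forall i j : 'I_s, (i <= j)%N -> a i j = 0) ->
  (forall i : 'I_s, 0 < b i) ->
  ocp_order a b s ->
  forall i : 'I_s, \sum_(j < s) a i j = \sum_(j < s) abar a b i j.
Proof.
move=> s34 _ b_gt0 ocp.
have s_ge3 : (3 <= s)%N by case: s34 => ->.
have moment := prk_order_cherry ocp s_ge3 true.
apply: (eq_of_weighted_second_moments (w := b)) => //.
- by rewrite (moment true true) (moment true false).
- by rewrite (moment false false) (moment true false).
Qed.
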